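(* Let $G=(V,E)$ be a finite, connected, undirected graph with $n\ge2$ vertices and let $r>1$. For any $\epsilon\in(0,1)$ and any $t\ge\frac{r}{r-1}n^3\phi(G)/\epsilon$, the Moran process on $G$ with fitness $r$ (started from a single mutant) reaches absorption within $t$ steps with probability at least $1-\epsilon$.
   Context: The Moran process on $G$ with mutant fitness $r>0$ is the Markov chain $(X_i)_{i\ge0}$ whose state $X_i\subseteq V$ is the set of vertices occupied by mutants; every other vertex is occupied by a non-mutant of fitness $1$. Write $W(S)=r|S|+|V\setminus S|$ for the total fitness. Given $X_i=S$, one step is: choose a vertex $x$ with probability $r/W(S)$ if $x\in S$ and $1/W(S)$ if $x\notin S$; then choose a neighbour $y$ of $x$ uniformly at random; set $X_{i+1}=S\cup\{y\}$ if $x\in S$ and $X_{i+1}=S\setminus\{y\}$ if $x\notin S$. The process starts from $X_0=\{x\}$ for a single vertex $x$. Absorption means reaching $X_i=\emptyset$ or $X_i=V$. For $X\subseteq V$, $\phi(X)=\sum_{x\in X}\frac{1}{\deg x}$, and $\phi(G)=\phi(V)$. *)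

(* Graph: finite type T with symmetric irreflexive edge relation e. *)
From HB Require Import structures.
From mathcomp Require Import all_boot all_order all_algebra.
Set Implicit Arguments. Unset Strict Implicit. Unset Printing Implicit Defensive.
Import Order.TTheory GRing.Theory Num.Theory.
Local Open Scope ring_scope.

Section Moran.
Variables (T : finType) (e : rel T) (R : realFieldType) (r : R).

Definition deg (x : T) : nat := #|[set y | e x y]|.

Definition phi_set (X : {set T}) : R := \sum_(x in X) ((deg x)%:R)^-1.
Definition phiG : R := phi_set [set: T].

Definition Wfit (S : {set T}) : R := r * #|S|%:R + #|~: S|%:R.

Definition fit (S : {set T}) (x : T) : R := if x \in S then r else 1.

(* state after x reproduces onto neighbour y *)
Definition next_state (S : {set T}) (x y : T) : {set T} :=
  if x \in S then y |: S else S :\ y.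

Definition absorbed (S : {set T}) : bool := (S == set0) || (S == [set: T]).

(* survival t S = probability that the Moran process started at X_0 = S
   has NOT reached an absorbing state among X_0, ..., X_t. *)
Fixpoint survival (t : nat) (S : {set T}) : R :=
  if absorbed S then 0 else
  match t with
  | 0 => 1
  | t'.+1 =>
      \sum_(x : T) \sum_(y : T | e x y)
         (fit S x / Wfit S) * ((deg x)%:R)^-1 * survival t' (next_state S x y)
  end.

Definition absorb_within (t : nat) (S : {set T}) : R := 1 - survival t S.

End Moran.

From HB Require Import structures.
From mathcomp Require Import all_boot all_order all_algebra.
From mathcomp Require Import ring lra.
Import Order.TTheory GRing.Theory Num.Theory.
Local Open Scope ring_scope.

(* The potential phi(X) = sum_{x in X} 1/deg x of the mutant set drifts
   upwards: if x reproduces onto a neighbour y, phi changes by +1/deg y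
   (mutant x, non-mutant y) or -1/deg y (the reverse), so that
     E[phi(X_{i+1}) | X_i = S] = phi(S) + (r - 1)/W(S) * B(S),
   where B(S) sums 1/(deg x deg y) over ordered edges leaving S.  When S is
   not absorbing, connectivity gives a boundary edge, so B(S) >= 1/n^2 and,
   as W(S) <= r n, the drift is at least delta = (r - 1)/(r n^3).  Since
   0 <= phi <= phi(G), an induction on t shows
     delta * t * P(not absorbed within t steps from S) <= phi(G) - phi(S),
   and the choice of t in the theorem makes the right-hand side at most
   delta * t * eps.  All lemmas hold for r >= 1; only the final step uses
   r > 1, to make delta positive. *)

Section MoranDrift.
Variables (T : finType) (e : rel T).
Hypothesis e_sym : symmetric e.
Hypothesis e_conn : forall x y : T, connect e x y.
Hypothesis n_ge2 : (2 <= #|T|)%N.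
Variables (R : realFieldType) (r : R).
Hypothesis r_ge1 : 1 <= r.

Local Notation n := (#|T|%:R : R).
Local Notation ideg x := (((deg e x)%:R : R)^-1).

Lemma r_gt0 : 0 < r.
Proof. exact: lt_le_trans ltr01 r_ge1. Qed.

Lemma n_gt0 : 0 < n.
Proof. by rewrite ltr0n; apply: leq_trans n_ge2. Qed.

Lemma deg_gt0 x : (0 < deg e x)%N.
Proof.
have [y y_neq_x] : exists y, y != x.
  have [a [b [_ _ a_neq_b]]] : exists a b : T, [/\ a \in T, b \in T & a != b].
    by apply/card_gt1P.
  by case: (eqVneq a x) => [<-|]; [exists b; rewrite eq_sym | exists a].
have /connectP [[|z p] /= path_xy last_y] := e_conn x y.
  by rewrite last_y eqxx in y_neq_x.
case/andP: path_xy => exz _.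
by apply/card_gt0P; exists z; rewrite inE.
Qed.

Lemma ideg_ge x : n^-1 <= ideg x.
Proof.
rewrite lef_pV2 ?posrE ?ltr0n ?deg_gt0 ?n_gt0 // ?ler_nat ?max_card //.
exact: leq_trans n_ge2.
Qed.

Lemma ideg_ge0 x : 0 <= ideg x.
Proof. by rewrite invr_ge0. Qed.

Lemma Wfit_ge (S : {set T}) : n <= Wfit r S.
Proof.
rewrite /Wfit -(cardsC S) natrD.
have : 0 <= (r - 1) * #|S|%:R by rewrite mulr_ge0 ?subr_ge0.
lra.
Qed.

Lemma Wfit_le (S : {set T}) : Wfit r S <= r * n.
Proof.
rewrite /Wfit -(cardsC S) natrD.
have : 0 <= (r - 1) * #|~: S|%:R by rewrite mulr_ge0 ?subr_ge0.
lra.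
Qed.

Lemma Wfit_gt0 (S : {set T}) : 0 < Wfit r S.
Proof. exact: lt_le_trans n_gt0 (Wfit_ge S). Qed.

Lemma sum_fit (S : {set T}) : \sum_x fit r S x = Wfit r S.
Proof.
rewrite (bigID (mem S)) /=.
rewrite (eq_bigr (fun _ => r)) => [|x xS]; last by rewrite /fit xS.
rewrite [X in _ + X](eq_bigr (fun _ => 1)) => [|x /negbTE xS]; last by rewrite /fit xS.
rewrite !sumr_const /Wfit mulr_natr -[1 *+ _]mulr_natr mul1r; congr (_ + _).
by congr (_%:R); apply: eq_card => x; rewrite !inE.
Qed.

Definition step_prob (S : {set T}) (x : T) : R := fit r S x / Wfit r S * ideg x.

Lemma step_prob_ge0 (S : {set T}) x : 0 <= step_prob S x.
Proof.
rewrite /step_prob /fit mulr_ge0 ?invr_ge0 // divr_ge0 ?(ltW (Wfit_gt0 S)) //.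
by case: (x \in S); rewrite ?ltW ?r_gt0.
Qed.

Lemma sum_step_prob (S : {set T}) : \sum_x \sum_(y | e x y) step_prob S x = 1.
Proof.
under eq_bigr => x _.
  rewrite (eq_bigl (fun y => y \in [set y | e x y])); last by move=> y; rewrite inE.
  rewrite sumr_const -/(deg e x) /step_prob -[_ *+ deg e x]mulr_natr divfK;
    last by rewrite pnatr_eq0 -lt0n deg_gt0.
  over.
by rewrite -mulr_suml sum_fit divff // gt_eqF // Wfit_gt0.
Qed.

Lemma phi_next_state (S : {set T}) x y :
  phi_set e R (next_state S x y) = phi_set e R S +
   (if x \in S then (if y \in S then 0 else ideg y)
    else (if y \in S then - ideg y else 0)).
Proof.
rewrite /next_state /phi_set; case: (x \in S); case yS: (y \in S).
- by rewrite addr0 (setUidPr _) // sub1set.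
- by rewrite big_setU1 /= ?yS // addrC.
- by rewrite [in RHS](big_setD1 y) //=; ring.
- by rewrite addr0 (setDidPl _) // disjoint_sym disjoints1 yS.
Qed.

Definition cut_weight (S : {set T}) (x y : T) : R :=
  if (x \in S) && (y \notin S) then ideg x * ideg y else 0.

Definition boundary_weight (S : {set T}) : R :=
  \sum_x \sum_(y | e x y) cut_weight S x y.

Lemma cut_weight_ge0 (S : {set T}) x y : 0 <= cut_weight S x y.
Proof. by rewrite /cut_weight; case: ifP => // _; rewrite mulr_ge0 ?ideg_ge0. Qed.

Lemma step_potential (S : {set T}) x y :
  step_prob S x * phi_set e R (next_state S x y) =
  step_prob S x * phi_set e R S
  + (Wfit r S)^-1 * (r * cut_weight S x y - cut_weight S y x).
Proof.
rewrite phi_next_state /step_prob /cut_weight /fit.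
by case: (x \in S); case: (y \in S) => /=; ring.
Qed.

Lemma sum_edges_swap (F : T -> T -> R) :
  \sum_x \sum_(y | e x y) F y x = \sum_x \sum_(y | e x y) F x y.
Proof.
under eq_bigr do rewrite big_mkcond.
rewrite exchange_big; apply: eq_bigr => x _; rewrite [RHS]big_mkcond.
by apply: eq_bigr => y _; rewrite e_sym.
Qed.

Lemma expected_potential (S : {set T}) :
  \sum_x \sum_(y | e x y) step_prob S x * phi_set e R (next_state S x y) =
  phi_set e R S + (Wfit r S)^-1 * (r - 1) * boundary_weight S.
Proof.
under eq_bigr do under eq_bigr do rewrite step_potential.
under eq_bigr do rewrite big_split /= -mulr_suml -(mulr_sumr _ _ _ (Wfit r S)^-1).
rewrite big_split /= -mulr_suml sum_step_prob mul1r; congr (_ + _).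
rewrite -mulr_sumr -mulrA; congr (_ * _).
under eq_bigr do rewrite sumrB -(mulr_sumr _ _ _ r).
rewrite sumrB -mulr_sumr (sum_edges_swap (cut_weight S)) /boundary_weight.
by rewrite mulrBl mul1r.
Qed.

Lemma exists_boundary_edge (S : {set T}) : ~~ absorbed S ->
  exists a b, [/\ a \in S, b \notin S & e a b].
Proof.
case/norP=> /set0Pn [a aS] S_neq_T.
have [/existsP [x /existsP [y /and3P [xS yS exy]]]|no_edge] :=
  boolP [exists x, exists y, [&& x \in S, y \notin S & e x y]].
  by exists x, y.
case/negP: S_neq_T.
have S_closed : closed e S.
  move=> x y exy; apply/idP/idP => [xS|yS]; apply: contraNT no_edge => Sc.
    by apply/existsP; exists x; apply/existsP; exists y; rewrite xS Sc.
  by apply/existsP; exists y; apply/existsP; exists x; rewrite yS Sc e_sym.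
apply/eqP/setP => y; rewrite inE.
by rewrite -(closed_connect S_closed (e_conn a y)) aS.
Qed.

Lemma boundary_weight_ge (S : {set T}) : ~~ absorbed S ->
  n^-1 * n^-1 <= boundary_weight S.
Proof.
move=> /exists_boundary_edge [a [b [aS bS eab]]].
rewrite /boundary_weight (bigD1 a) //= (bigD1 b) //= {1}/cut_weight aS bS /=.
have : 0 <= \sum_(y | e a y && (y != b)) cut_weight S a y.
  by apply: sumr_ge0 => *; apply: cut_weight_ge0.
have : 0 <= \sum_(x | x != a) \sum_(y | e x y) cut_weight S x y.
  by do 2![apply: sumr_ge0 => *]; apply: cut_weight_ge0.
have : n^-1 * n^-1 <= ideg a * ideg b.
  by apply: ler_pM; rewrite ?invr_ge0 ?ler0n ?ideg_ge.
lra.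
Qed.

Definition drift_bound : R := (r - 1) / (r * n ^+ 3).

Lemma drift_bound_ge0 : 0 <= drift_bound.
Proof.
by rewrite divr_ge0 ?subr_ge0 // mulr_ge0 ?exprn_ge0 ?(ltW n_gt0) ?(ltW r_gt0).
Qed.

Lemma drift_ge (S : {set T}) : ~~ absorbed S ->
  drift_bound <= (Wfit r S)^-1 * (r - 1) * boundary_weight S.
Proof.
move=> S_live.
have Wfit_inv : (r * n)^-1 <= (Wfit r S)^-1.
  by rewrite lef_pV2 ?posrE ?Wfit_gt0 ?mulr_gt0 ?n_gt0 ?r_gt0 ?Wfit_le.
have -> : drift_bound = (r * n)^-1 * (r - 1) * (n^-1 * n^-1).
  by rewrite /drift_bound; field; rewrite !gt_eqF ?n_gt0 ?r_gt0.
have r1_ge0 : 0 <= r - 1 by rewrite subr_ge0.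
apply: ler_pM; last exact: boundary_weight_ge.
- by rewrite mulr_ge0 // invr_ge0 mulr_ge0 ?(ltW r_gt0) ?(ltW n_gt0).
- by rewrite mulr_ge0 // invr_ge0 (ltW n_gt0).
- exact: ler_wpM2r.
Qed.

Lemma survival_le1 t (S : {set T}) : survival e r t S <= 1.
Proof.
elim: t S => [|t IH] S /=; first by case: ifP.
case: ifP => // _; rewrite -[X in _ <= X](sum_step_prob S).
do 2![apply: ler_sum => ? _].
by apply: ler_piMr; [apply: step_prob_ge0 | apply: IH].
Qed.

Lemma phi_set_le (S : {set T}) : phi_set e R S <= phiG e R.
Proof.
rewrite /phiG /phi_set big_mkcond [X in _ <= X]big_mkcond /=.
by apply: ler_sum => x _; rewrite in_setT; case: ifP => // _; apply: ideg_ge0.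
Qed.

(* Optional-stopping bound: each of the t steps before absorption raises
   the potential by at least drift_bound in expectation, and the potential
   can rise by at most phi(G) - phi(S) in total. *)
Lemma survival_potential_bound t (S : {set T}) :
  drift_bound * t%:R * survival e r t S <= phiG e R - phi_set e R S.
Proof.
elim: t S => [|t IH] S.
  by rewrite mulr0 mul0r subr_ge0 phi_set_le.
rewrite /=; case: ifP => S_abs; first by rewrite mulr0 subr_ge0 phi_set_le.
apply: (@le_trans _ _ (\sum_x \sum_(y | e x y)
    step_prob S x * (phiG e R - phi_set e R (next_state S x y) + drift_bound))).
  rewrite mulr_sumr; apply: ler_sum => x _; rewrite mulr_sumr; apply: ler_sum => y _.
  have IHxy := IH (next_state S x y).
  have s_le1 := ler_piMr drift_bound_ge0 (survival_le1 t (next_state S x y)).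
  have p_ge0 := step_prob_ge0 S x.
  set s := survival e r t _ in IHxy s_le1 *; set p := step_prob S x in p_ge0 *.
  have -> : drift_bound * t.+1%:R * (p * s) =
            p * (drift_bound * t%:R * s + drift_bound * s).
    by rewrite -addn1 natrD; ring.
  by apply: (ler_wpM2l p_ge0); lra.
under eq_bigr do under eq_bigr do rewrite mulrDr mulrBr.
under eq_bigr do rewrite big_split /= sumrB
  -(mulr_suml _ _ _ (phiG e R)) -(mulr_suml _ _ _ drift_bound).
rewrite big_split /= sumrB -!mulr_suml !sum_step_prob !mul1r expected_potential.
by have := drift_ge S (negbT S_abs); lra.
Qed.

Lemma survival_bound t (S : {set T}) :
  drift_bound * t%:R * (1 - absorb_within e r t S) <= phiG e R.
Proof.
rewrite /absorb_within opprB addrC subrK.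
have : 0 <= phi_set e R S by apply: sumr_ge0 => x _; apply: ideg_ge0.
by have := survival_potential_bound t S; lra.
Qed.

(* phi(G) > 0, which forces t > 0 under the hypothesis of the theorem. *)
Lemma phiG_gt0 : 0 < phiG e R.
Proof.
have /card_gt0P [x _] : (0 < #|T|)%N by apply: ltnW.
rewrite /phiG /phi_set (bigD1 x) ?in_setT //= ltr_wpDr ?invr_gt0 ?ltr0n ?deg_gt0 //.
by apply: sumr_ge0 => y _; apply: ideg_ge0.
Qed.

End MoranDrift.

Theorem corollary8 (T : finType) (e : rel T)
  (e_sym : symmetric e) (e_irr : irreflexive e)
  (e_conn : forall x y : T, connect e x y)
  (n_ge2 : (2 <= #|T|)%N)
  (R : realFieldType) (r : R) (hr : 1 < r)
  (eps : R) (heps0 : 0 < eps) (heps1 : eps < 1)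
  (t : nat)
  (ht : r / (r - 1) * (#|T|%:R ^+ 3) * phiG e R / eps <= t%:R)
  (x0 : T) :
  1 - eps <= absorb_within e r t [set x0].
Proof.
have r_ge1 : 1 <= r by apply: ltW.
set delta := drift_bound T R r.
have n_gt0 := @n_gt0 T n_ge2 R.
have delta_gt0 : 0 < delta by rewrite divr_gt0 ?subr_gt0 ?mulr_gt0 ?exprn_gt0 //; lra.
(* The hypothesis on t reads phi(G) <= delta * eps * t. *)
have G_le : phiG e R <= delta * t%:R * eps.
  have ht_scaled : r / (r - 1) * (#|T|%:R ^+ 3) * phiG e R / eps * (eps * delta)
             = phiG e R.
    by rewrite /delta /drift_bound; field; rewrite !gt_eqF ?subr_gt0 //; lra.
  have -> : delta * t%:R * eps = t%:R * (eps * delta) by ring.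
  by rewrite -[X in X <= _]ht_scaled ler_wpM2r // ltW // mulr_gt0.
have deltat_gt0 : 0 < delta * t%:R.
  by have := @phiG_gt0 T e e_conn n_ge2 R; have := mulr_ge0 (ltW delta_gt0) (ler0n R t); nra.
have := le_trans (@survival_bound T e e_sym e_conn n_ge2 R r r_ge1 t [set x0]) G_le.
by rewrite -/delta ler_pM2l // => ?; lra.
Qed.
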